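(* Let $\mu,\nu,d$ be integers ($d\ge1$) and $M$ an integer with $q^{\mu-1}\le M<q^\mu$. Let $\kappa_d$ be an integer with $1\le\kappa_d\le\frac23(\mu+\nu)$ and $q^{\kappa_d-1}<M^2/d^2\le q^{\kappa_d}$. Let $\rho_1$ be an integer with $0\le\rho_1\le\mu+\nu-\kappa_d$, let $\vartheta'\in\mathbb{R}$, and let $l\ge0$ be an integer. For $0\le u<q^{\kappa_d}$ and $0\le h<q^{\rho_1}$ put $$c_{\kappa_d,\rho_1,l}(u,h)=\frac{1}{q^{\rho_1}}\sum_{0\le w<q^{\rho_1}}f_P^{(\kappa_d+\rho_1)}\big(u+wq^{\kappa_d}+q^{\kappa_d+\rho_1}\lfloor q^l/q^{\rho_1}\rfloor\big)\,\overline{f_P^{(\kappa_d+\rho_1)}\big(wq^{\kappa_d}+q^{\kappa_d+\rho_1}\lfloor q^l/q^{\rho_1}\rfloor\big)}\,e\Big(-\frac{hw}{q^{\rho_1}}\Big),$$ and $$S(M,d,l)=\sum_{0\le h<q^{\rho_1}}\ \sum_{\frac{M}{qd}\le m'<\frac Md}\frac1{m'}\sum_{\substack{0\le k'<m'\\ \gcd(k',m')=1}}\Big|\sum_{0\le u<q^{\kappa_d}}c_{\kappa_d,\rho_1,l}(u,h)\,e\Big(-\frac{u\vartheta'}{q^{\mu+\nu}}+\frac{uk'}{m'}\Big)\Big|.$$ Then $|S(M,d,l)|\ll(\log q)\,q^{\rho_1/2+\kappa_d}$.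
   Context: Fix an integer $q\ge2$. For an integer $n\ge0$, $\varepsilon_i(n)$ is the $i$-th digit of $n$ in base $q$ ($\varepsilon_0$ the units digit). For real $x>0$, $T_q(x)=\lfloor\log x/\log q\rfloor$. $e(x)=\exp(2\pi i x)$. $P:\mathbb{N}\to\mathbb{N}$ is a nondecreasing integer-valued function. For integers $x,y\ge0$, $a_P(x,y)=\sum_{i\ge0}\varepsilon_{i+P(y)}(x)\cdots\varepsilon_i(x)$. Fix $\alpha\in\mathbb{R}$ and set $f_P(x,y)=e(\alpha a_P(x,y))$. For an integer $\rho\ge0$, $f_P^{(\rho)}(x,y)=f_P(x\bmod q^\rho,y)$ and, for an integer $n\ge1$, $f_P^{(\rho)}(n)=f_P^{(\rho)}(n,T_q(n))$. The implied constant depends at most on $q$. *)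

From Stdlib Require Import Reals Lra Lia List Arith ZArith.
Open Scope R_scope.

Definition Cx : Type := (R * R)%type.
Definition Cx0 : Cx := (0, 0).
Definition Cadd (z w : Cx) : Cx := (fst z + fst w, snd z + snd w).
Definition Cmul (z w : Cx) : Cx :=
  (fst z * fst w - snd z * snd w, fst z * snd w + snd z * fst w).
Definition Cconj (z : Cx) : Cx := (fst z, - snd z).
Definition Cscale (r : R) (z : Cx) : Cx := (r * fst z, r * snd z).
Definition Cnorm (z : Cx) : R := sqrt (fst z * fst z + snd z * snd z).

Definition ee (x : R) : Cx := (cos (2 * PI * x), sin (2 * PI * x)).

Definition csum (n : nat) (f : nat -> Cx) : Cx :=
  fold_right Cadd Cx0 (map f (seq 0 n)).
Definition rsum (n : nat) (f : nat -> R) : R :=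
  fold_right Rplus 0 (map f (seq 0 n)).

Definition digit (q i n : nat) : nat := ((n / q ^ i) mod q)%nat.

(* a_P(x,y) = sum_{i>=0} eps_{i+P(y)}(x) ... eps_i(x).
   Terms with i > x vanish (eps_i(x) = 0 as q^i > x), so the sum is
   truncated to 0 <= i <= x. *)
Definition aP (q : nat) (P : nat -> nat) (x y : nat) : nat :=
  fold_right Nat.add 0%nat
    (map (fun i => fold_right Nat.mul 1%nat
                     (map (fun j => digit q (i + j) x) (seq 0 (S (P y)))))
         (seq 0 (S x))).

Definition Tq (q n : nat) : nat :=
  Z.to_nat (Int_part (ln (INR n) / ln (INR q))).

Definition fP (q : nat) (P : nat -> nat) (alpha : R) (x y : nat) : Cx :=
  ee (alpha * INR (aP q P x y)).

Definition fPrho (q : nat) (P : nat -> nat) (alpha : R) (rho n : nat) : Cx :=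
  fP q P alpha (n mod q ^ rho) (Tq q n).

Definition cfun (q : nat) (P : nat -> nat) (alpha : R) (kappa rho1 l u h : nat) : Cx :=
  let base := (q ^ (kappa + rho1) * (q ^ l / q ^ rho1))%nat in
  Cscale (/ INR (q ^ rho1))
    (csum (q ^ rho1) (fun w =>
       Cmul (Cmul (fPrho q P alpha (kappa + rho1) (u + w * q ^ kappa + base))
                  (Cconj (fPrho q P alpha (kappa + rho1) (w * q ^ kappa + base))))
            (ee (- (INR h * INR w) / INR (q ^ rho1))))).

(* S(M,d,l); m' ranges over integers with M/(qd) <= m' < M/d (all such m'
   are positive and < M, so summing over 0 <= m' < M with the filter is exact). *)
Definition Ssum (q : nat) (P : nat -> nat) (alpha : R) (mu nu M d : Z)
    (kappa rho1 l : nat) (theta : R) : R :=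
  rsum (q ^ rho1) (fun h =>
    rsum (Z.to_nat M) (fun m =>
      if Rle_dec (IZR M / (INR q * IZR d)) (INR m) then
      if Rlt_dec (INR m) (IZR M / IZR d) then
        / INR m *
        rsum m (fun k =>
          if Nat.eqb (Nat.gcd k m) 1 then
            Cnorm (csum (q ^ kappa) (fun u =>
              Cmul (cfun q P alpha kappa rho1 l u h)
                   (ee (- (INR u * theta) / powerRZ (INR q) (mu + nu)
                        + INR u * INR k / INR m))))
          else 0)
      else 0 else 0)).

From Stdlib Require Import Reals Lra Lia List ZArith FinFun Classical.
Open Scope R_scope.

(* For each h, Cauchy-Schwarz over the reduced fractions k'/m' separates the weights 1/m', whose
   squares sum to at most q + 1 because M/(qd) <= m' < M/d, from the exponential sums in u, whose
   mean square the large sieve bounds by 20 q^kappa sum_u |c(u,h)|^2: distinct fractions with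
   denominators below M/d are at least (d/M)^2 >= q^-kappa apart modulo 1. A second Cauchy-Schwarz
   over h and the bound sum_h |c(u,h)|^2 <= 20, which is the large sieve again at the q^rho1-th
   roots of unity (|f_P| = 1), give S <= 20 sqrt(q + 1) q^(kappa + rho1/2).

   The large sieve with constant 20 N is proved in its dual form. N times the sum of squares over
   [0, N) is at most the sum of squares over all i + j with i, j < 2N; expanding the square
   produces the kernel |G(y_r - y_s)|^2, G the geometric sum of length 2N, which is at most
   min(4 N^2, ||t||^-2). A Schur test reduces everything to sums of this kernel over 1/N-spaced
   points, bounded by sorting the points into bins of width 1/N. *)

(** * Finite sums over lists *)

Definition lsum {A} (l : list A) (f : A -> R) : R := fold_right Rplus 0 (map f l).
Definition clsum {A} (l : list A) (f : A -> Cx) : Cx := fold_right Cadd Cx0 (map f l).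

Lemma rsum_lsum n f : rsum n f = lsum (seq 0 n) f. Proof. reflexivity. Qed.
Lemma csum_clsum n f : csum n f = clsum (seq 0 n) f. Proof. reflexivity. Qed.

Lemma lsum_cons {A} a l (f : A -> R) : lsum (a :: l) f = f a + lsum l f.
Proof. reflexivity. Qed.

Lemma lsum_app {A} l1 l2 (f : A -> R) : lsum (l1 ++ l2) f = lsum l1 f + lsum l2 f.
Proof.
  induction l1; cbn [app]; [change (lsum nil f) with 0; ring|].
  rewrite !lsum_cons, IHl1; ring.
Qed.

Lemma lsum_ext {A} l (f g : A -> R) :
  (forall x, In x l -> f x = g x) -> lsum l f = lsum l g.
Proof.
  induction l; intros H; [reflexivity|]. rewrite !lsum_cons, H, IHl; auto with datatypes.
Qed.

Lemma lsum_le {A} l (f g : A -> R) :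
  (forall x, In x l -> f x <= g x) -> lsum l f <= lsum l g.
Proof.
  induction l; intros H; [apply Rle_refl|]. rewrite !lsum_cons.
  apply Rplus_le_compat; auto with datatypes.
Qed.

Lemma lsum_const {A} (l : list A) c : lsum l (fun _ => c) = INR (length l) * c.
Proof.
  induction l; cbn [length]; [cbn; ring|]. rewrite lsum_cons, IHl, S_INR; ring.
Qed.

Lemma lsum_nonneg {A} l (f : A -> R) : (forall x, In x l -> 0 <= f x) -> 0 <= lsum l f.
Proof.
  intros H. rewrite <- (Rmult_0_r (INR (length l))), <- lsum_const. now apply lsum_le.
Qed.

Lemma lsum_plus {A} l (f g : A -> R) : lsum l (fun x => f x + g x) = lsum l f + lsum l g.
Proof. induction l; [cbn; ring|]. rewrite !lsum_cons, IHl; ring. Qed.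

Lemma lsum_minus {A} l (f g : A -> R) : lsum l (fun x => f x - g x) = lsum l f - lsum l g.
Proof. induction l; [cbn; ring|]. rewrite !lsum_cons, IHl; ring. Qed.

Lemma lsum_scal_l {A} l c (f : A -> R) : lsum l (fun x => c * f x) = c * lsum l f.
Proof. induction l; [cbn; ring|]. rewrite !lsum_cons, IHl; ring. Qed.

Lemma lsum_scal_r {A} l c (f : A -> R) : lsum l (fun x => f x * c) = lsum l f * c.
Proof. induction l; [cbn; ring|]. rewrite !lsum_cons, IHl; ring. Qed.

Lemma lsum_swap {A B} (l1 : list A) (l2 : list B) (f : A -> B -> R) :
  lsum l1 (fun a => lsum l2 (f a)) = lsum l2 (fun b => lsum l1 (fun a => f a b)).
Proof.
  induction l1.
  - transitivity (lsum l2 (fun _ => 0)); [|apply lsum_ext; reflexivity].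
    rewrite lsum_const; cbn; ring.
  - rewrite lsum_cons, IHl1, <- lsum_plus. reflexivity.
Qed.

Lemma lsum_map {A B} (g : A -> B) l (f : B -> R) : lsum (map g l) f = lsum l (fun x => f (g x)).
Proof. unfold lsum; now rewrite map_map. Qed.

Lemma lsum_flat_map {A B} (F : A -> list B) l (f : B -> R) :
  lsum (flat_map F l) f = lsum l (fun a => lsum (F a) f).
Proof. induction l; [reflexivity|]. cbn [flat_map]. now rewrite lsum_app, lsum_cons, IHl. Qed.

Lemma lsum_filter {A} (p : A -> bool) l (f : A -> R) :
  lsum (filter p l) f = lsum l (fun x => if p x then f x else 0).
Proof.
  induction l; [reflexivity|]. cbn [filter]. rewrite lsum_cons.
  destruct (p a); rewrite ?lsum_cons, IHl; ring.
Qed.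

Lemma lsum_seq_shift s n f : lsum (seq s n) f = lsum (seq 0 n) (fun u => f (s + u)%nat).
Proof.
  revert s f; induction n; intros s f; [reflexivity|].
  cbn [seq]. rewrite !lsum_cons, IHn, (IHn 1%nat), Nat.add_0_r.
  f_equal. apply lsum_ext; intros; f_equal; lia.
Qed.

Lemma lsum_seq_mono n m f : (forall i, 0 <= f i) -> lsum (seq 0 n) f <= lsum (seq 0 (n + m)) f.
Proof.
  intros Hf. rewrite seq_app, lsum_app.
  pose proof (lsum_nonneg (seq (0 + n) m) f (fun i _ => Hf i)). lra.
Qed.

Lemma lsum_list_prod {A B} (l1 : list A) (l2 : list B) (f : A * B -> R) :
  lsum (list_prod l1 l2) f = lsum l1 (fun a => lsum l2 (fun b => f (a, b))).
Proof. rewrite list_prod_as_flat_map, lsum_flat_map. apply lsum_ext; intros; apply lsum_map. Qed.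

Lemma lsum_incl_le {A} (l J : list A) (g : A -> R) :
  NoDup l -> incl l J -> (forall x, 0 <= g x) -> lsum l g <= lsum J g.
Proof.
  intros Hl; revert J; induction Hl as [|a l Ha _ IH]; intros J HJ Hg.
  - apply lsum_nonneg; auto.
  - destruct (in_split a J (HJ a (or_introl eq_refl))) as (J1 & J2 & ->).
    assert (Hl : lsum l g <= lsum (J1 ++ J2) g).
    { apply IH; auto. intros x Hx.
      destruct (in_app_or _ _ _ (HJ x (or_intror Hx))) as [|[<-|]];
        auto with datatypes; contradiction. }
    rewrite lsum_app in *; rewrite !lsum_cons. lra.
Qed.

Lemma lsum_inj_le {A B} (I : list A) (J : list B) (f : A -> B) (g : B -> R) :
  NoDup I -> (forall i j, In i I -> In j I -> f i = f j -> i = j) ->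
  (forall i, In i I -> In (f i) J) -> (forall b, 0 <= g b) ->
  lsum I (fun i => g (f i)) <= lsum J g.
Proof.
  intros HI Hinj HJ Hg. rewrite <- lsum_map. apply lsum_incl_le; auto.
  - now apply Injective_map_NoDup_in.
  - intros b Hb. apply in_map_iff in Hb as (i & <- & Hi). auto.
Qed.

Lemma lsum_Cauchy_Schwarz {A} l (f g : A -> R) :
  lsum l (fun x => f x * g x) <= sqrt (lsum l (fun x => f x ^ 2)) * sqrt (lsum l (fun x => g x ^ 2)).
Proof.
  set (a := lsum l (fun x => f x ^ 2)). set (b := lsum l (fun x => g x ^ 2)).
  set (c := lsum l (fun x => f x * g x)).
  assert (Ha : 0 <= a) by (apply lsum_nonneg; intros; apply pow2_ge_0).
  assert (Hb : 0 <= b) by (apply lsum_nonneg; intros; apply pow2_ge_0).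
  (* the quadratic [t |-> sum (t f - g)^2] is nonnegative, so its discriminant is not positive *)
  assert (Hq : forall t, 0 <= a * t ^ 2 - 2 * c * t + b).
  { intros t. replace (a * t ^ 2 - 2 * c * t + b) with (lsum l (fun x => (t * f x - g x) ^ 2)).
    - apply lsum_nonneg; intros; apply pow2_ge_0.
    - rewrite (lsum_ext _ _ (fun x => t ^ 2 * f x ^ 2 + (-2 * t) * (f x * g x) + g x ^ 2))
        by (intros; ring).
      rewrite !lsum_plus, !lsum_scal_l. unfold a, b, c. ring. }
  assert (Hc : c ^ 2 <= a * b).
  { destruct (Req_dec a 0) as [H0|H0].
    - destruct (Req_dec c 0) as [->|Hc]; [nra|].
      specialize (Hq ((b + 1) / (2 * c))). rewrite H0 in Hq.
      replace (0 * ((b + 1) / (2 * c)) ^ 2 - 2 * c * ((b + 1) / (2 * c)) + b) with (-1) in Hq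
        by (field; auto). lra.
    - specialize (Hq (c / a)).
      replace (a * (c / a) ^ 2 - 2 * c * (c / a) + b) with ((a * b - c ^ 2) / a) in Hq by (field; auto).
      apply Rmult_le_compat_r with (r := a) in Hq; [|lra].
      unfold Rdiv in Hq. rewrite Rmult_assoc, Rinv_l in Hq by auto. lra. }
  rewrite <- sqrt_mult by auto.
  destruct (Rle_lt_dec c 0); [eapply Rle_trans; eauto; apply sqrt_pos|].
  rewrite <- (sqrt_pow2 c) by lra. now apply sqrt_le_1_alt.
Qed.

Lemma lsum_sqrt_le {A} l (f : A -> R) : (forall x, 0 <= f x) ->
  lsum l (fun x => sqrt (f x)) <= sqrt (INR (length l)) * sqrt (lsum l f).
Proof.
  intros Hf.
  replace (lsum l (fun x => sqrt (f x))) with (lsum l (fun x => 1 * sqrt (f x)))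
    by (apply lsum_ext; intros; ring).
  eapply Rle_trans; [apply lsum_Cauchy_Schwarz|].
  rewrite (lsum_ext _ (fun _ => 1 ^ 2) (fun _ => 1)), lsum_const, Rmult_1_r by (intros; ring).
  rewrite (lsum_ext _ (fun x => sqrt (f x) ^ 2) f); [apply Rle_refl|].
  intros; rewrite <- Rsqr_pow2; apply Rsqr_sqrt; auto.
Qed.

(** * Complex numbers as pairs of reals *)

Definition Cnorm2 (z : Cx) : R := fst z * fst z + snd z * snd z.
Definition Cdot (z w : Cx) : R := fst z * fst w + snd z * snd w.

Lemma Cx_ext (z w : Cx) : fst z = fst w -> snd z = snd w -> z = w.
Proof. destruct z, w; simpl; intros; subst; auto. Qed.

Lemma clsum_fst {A} l (f : A -> Cx) : fst (clsum l f) = lsum l (fun x => fst (f x)).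
Proof. unfold clsum, lsum; induction l; simpl; auto. now rewrite IHl. Qed.
Lemma clsum_snd {A} l (f : A -> Cx) : snd (clsum l f) = lsum l (fun x => snd (f x)).
Proof. unfold clsum, lsum; induction l; simpl; auto. now rewrite IHl. Qed.

Lemma clsum_ext {A} l (f g : A -> Cx) : (forall x, In x l -> f x = g x) -> clsum l f = clsum l g.
Proof.
  intros H; apply Cx_ext; rewrite ?clsum_fst, ?clsum_snd; apply lsum_ext; intros; now rewrite H.
Qed.

Lemma clsum_app {A} l1 l2 (f : A -> Cx) : clsum (l1 ++ l2) f = Cadd (clsum l1 f) (clsum l2 f).
Proof. apply Cx_ext; cbn [Cadd fst snd]; rewrite ?clsum_fst, ?clsum_snd; apply lsum_app. Qed.

Lemma clsum_list_prod {A B} (l1 : list A) (l2 : list B) (f : A * B -> Cx) :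
  clsum (list_prod l1 l2) f = clsum l1 (fun a => clsum l2 (fun b => f (a, b))).
Proof.
  apply Cx_ext; rewrite ?clsum_fst, ?clsum_snd, lsum_list_prod; apply lsum_ext; intros;
    now rewrite ?clsum_fst, ?clsum_snd.
Qed.

Lemma Cnorm2_nonneg z : 0 <= Cnorm2 z. Proof. unfold Cnorm2; nra. Qed.
Lemma Cnorm_nonneg z : 0 <= Cnorm z. Proof. apply sqrt_pos. Qed.
Lemma Cnorm_sqr z : Cnorm z ^ 2 = Cnorm2 z.
Proof. unfold Cnorm. rewrite <- Rsqr_pow2. apply Rsqr_sqrt, Cnorm2_nonneg. Qed.
Lemma Cnorm2_mul z w : Cnorm2 (Cmul z w) = Cnorm2 z * Cnorm2 w.
Proof. destruct z, w; unfold Cnorm2, Cmul; simpl; ring. Qed.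
Lemma Cnorm_mul z w : Cnorm (Cmul z w) = Cnorm z * Cnorm w.
Proof. unfold Cnorm. rewrite <- sqrt_mult by apply Cnorm2_nonneg. f_equal. apply Cnorm2_mul. Qed.
Lemma Cnorm2_conj z : Cnorm2 (Cconj z) = Cnorm2 z.
Proof. destruct z; unfold Cnorm2; simpl; ring. Qed.
Lemma Cnorm2_scale r z : Cnorm2 (Cscale r z) = r ^ 2 * Cnorm2 z.
Proof. destruct z; unfold Cnorm2; simpl; ring. Qed.
Lemma Cnorm2_ee x : Cnorm2 (ee x) = 1.
Proof. unfold Cnorm2, ee; simpl. pose proof (sin2_cos2 (2 * PI * x)). unfold Rsqr in *. lra. Qed.
Lemma Cnorm_ee x : Cnorm (ee x) = 1.
Proof. unfold Cnorm. fold (Cnorm2 (ee x)). now rewrite Cnorm2_ee, sqrt_1. Qed.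

Lemma Cdot_le z w : Cdot z w <= Cnorm z * Cnorm w.
Proof.
  destruct z as [a b], w as [c e]. unfold Cdot, Cnorm; simpl.
  pose proof (lsum_Cauchy_Schwarz (true :: false :: nil)
    (fun t : bool => if t then a else b) (fun t => if t then c else e)) as H.
  cbn in H. rewrite !Rplus_0_r, !Rmult_1_r in H. exact H.
Qed.

Lemma Cdot_clsum_l {A} l (f : A -> Cx) w : Cdot (clsum l f) w = lsum l (fun x => Cdot (f x) w).
Proof. unfold Cdot. now rewrite clsum_fst, clsum_snd, <- !lsum_scal_r, <- lsum_plus. Qed.
Lemma Cdot_clsum_r {A} l (f : A -> Cx) w : Cdot w (clsum l f) = lsum l (fun x => Cdot w (f x)).
Proof. unfold Cdot. now rewrite clsum_fst, clsum_snd, <- !lsum_scal_l, <- lsum_plus. Qed.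
Lemma Cnorm2_clsum {A} l (f : A -> Cx) :
  Cnorm2 (clsum l f) = lsum l (fun i => lsum l (fun j => Cdot (f i) (f j))).
Proof.
  change (Cnorm2 (clsum l f)) with (Cdot (clsum l f) (clsum l f)).
  rewrite Cdot_clsum_l. apply lsum_ext; intros; apply Cdot_clsum_r.
Qed.

Lemma Cnorm_add z w : Cnorm (Cadd z w) <= Cnorm z + Cnorm w.
Proof.
  assert (E : Cnorm2 (Cadd z w) = Cnorm2 z + 2 * Cdot z w + Cnorm2 w)
    by (destruct z, w; unfold Cnorm2, Cdot; simpl; ring).
  pose proof (Cdot_le z w). pose proof (Cnorm_nonneg z). pose proof (Cnorm_nonneg w).
  unfold Cnorm at 1. rewrite <- (sqrt_pow2 (Cnorm z + Cnorm w)) by lra.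
  apply sqrt_le_1_alt. fold (Cnorm2 (Cadd z w)). rewrite E, <- (Cnorm_sqr z), <- (Cnorm_sqr w).
  nra.
Qed.

Lemma Cnorm_clsum {A} l (f : A -> Cx) : Cnorm (clsum l f) <= lsum l (fun x => Cnorm (f x)).
Proof.
  induction l as [|a l IH].
  - unfold Cnorm; cbn. rewrite Rmult_0_l, Rplus_0_l, sqrt_0. apply Rle_refl.
  - change (clsum (a :: l) f) with (Cadd (f a) (clsum l f)). rewrite lsum_cons.
    eapply Rle_trans; [apply Cnorm_add|]. lra.
Qed.

Lemma Cmul_assoc a b c : Cmul (Cmul a b) c = Cmul a (Cmul b c).
Proof. destruct a, b, c; unfold Cmul; simpl; f_equal; ring. Qed.

Lemma Cmul_clsum_l {A} z l (f : A -> Cx) : Cmul z (clsum l f) = clsum l (fun x => Cmul z (f x)).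
Proof.
  apply Cx_ext; unfold Cmul; cbn [fst snd]; rewrite ?clsum_fst, ?clsum_snd; cbn [fst snd];
    rewrite <- !lsum_scal_l; [rewrite <- lsum_minus | rewrite <- lsum_plus]; reflexivity.
Qed.
Lemma Cmul_clsum_r {A} z l (f : A -> Cx) : Cmul (clsum l f) z = clsum l (fun x => Cmul (f x) z).
Proof.
  apply Cx_ext; unfold Cmul; cbn [fst snd]; rewrite ?clsum_fst, ?clsum_snd; cbn [fst snd];
    rewrite <- !lsum_scal_r; [rewrite <- lsum_minus | rewrite <- lsum_plus]; reflexivity.
Qed.
Lemma Cconj_clsum {A} l (f : A -> Cx) : Cconj (clsum l f) = clsum l (fun x => Cconj (f x)).
Proof.
  apply Cx_ext; unfold Cconj; cbn [fst snd]; rewrite ?clsum_fst, ?clsum_snd; [reflexivity|].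
  replace (- lsum l (fun x => snd (f x))) with (-1 * lsum l (fun x => snd (f x))) by ring.
  rewrite <- lsum_scal_l. apply lsum_ext; intros x _; destruct (f x); simpl; ring.
Qed.

Lemma ee_add a b : ee (a + b) = Cmul (ee a) (ee b).
Proof. unfold ee, Cmul; simpl. rewrite Rmult_plus_distr_l, cos_plus, sin_plus. f_equal; ring. Qed.
Lemma ee_0 : ee 0 = (1, 0).
Proof. unfold ee. now rewrite Rmult_0_r, cos_0, sin_0. Qed.
Lemma Cconj_ee x : Cconj (ee x) = ee (- x).
Proof. unfold ee, Cconj; simpl. rewrite Ropp_mult_distr_r_reverse, cos_neg, sin_neg. reflexivity. Qed.

Lemma ee_INR k : ee (INR k) = (1, 0).
Proof.
  unfold ee. replace (2 * PI * INR k) with (0 + 2 * INR k * PI) by ring.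
  now rewrite cos_period, sin_period, cos_0, sin_0.
Qed.

Lemma ee_IZR n : ee (IZR n) = (1, 0).
Proof.
  destruct (Z_le_gt_dec 0 n).
  - rewrite <- (Z2Nat.id n), <- INR_IZR_INZ by lia. apply ee_INR.
  - replace n with (- Z.of_nat (Z.to_nat (- n)))%Z by lia.
    rewrite opp_IZR, <- INR_IZR_INZ, <- Cconj_ee, ee_INR. unfold Cconj; simpl; f_equal; ring.
Qed.

Lemma ee_add_IZR y n : ee (y + IZR n) = ee y.
Proof. rewrite ee_add, ee_IZR. destruct (ee y); unfold Cmul; simpl; f_equal; ring. Qed.

(* [Cdot] is the real part of [z * conj w], hence invariant under a common rotation. *)
Lemma Cdot_rotate z w a : Cdot (Cmul z (ee a)) (Cmul w (ee a)) = Cdot z w.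
Proof.
  destruct z as [z1 z2], w as [w1 w2]; unfold Cdot, Cmul, ee; simpl.
  pose proof (sin2_cos2 (2 * PI * a)) as H. unfold Rsqr in H.
  set (c := cos (2 * PI * a)) in *. set (s := sin (2 * PI * a)) in *.
  transitivity ((z1 * w1 + z2 * w2) * (s * s + c * c)); [ring|]. rewrite H; ring.
Qed.

Lemma Cdot_ee_move z w a b : Cdot (Cmul z (ee a)) (Cmul w (ee b)) = Cdot (Cmul z (ee (a - b))) w.
Proof.
  replace a with ((a - b) + b) at 1 by ring.
  rewrite ee_add, <- Cmul_assoc, Cdot_rotate. reflexivity.
Qed.

(** * Geometric sums *)

Definition geom (K : nat) (y : R) : Cx := clsum (seq 0 K) (fun i => ee (INR i * y)).

Lemma geom_telescope K y :
  Cmul (Cadd (ee y) (-1, 0)) (geom K y) = Cadd (ee (INR K * y)) (-1, 0).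
Proof.
  induction K.
  - unfold geom; cbn. rewrite Rmult_0_l, ee_0. unfold Cmul, Cadd; simpl. f_equal; ring.
  - unfold geom in *. rewrite seq_S, S_INR.
    rewrite clsum_app. change (clsum ((0 + K)%nat :: nil) ?f) with (Cadd (f K) Cx0).
    replace ((INR K + 1) * y) with (INR K * y + y) by ring. rewrite ee_add.
    revert IHK. generalize (clsum (seq 0 K) (fun i => ee (INR i * y))) (ee y) (ee (INR K * y)).
    intros [g1 g2] [a b] [c e]. unfold Cmul, Cadd, Cx0; simpl. intros E. injection E; intros.
    f_equal; nra.
Qed.

Lemma geom_neg K y : geom K (- y) = Cconj (geom K y).
Proof.
  unfold geom. rewrite Cconj_clsum. apply clsum_ext; intros.
  rewrite Cconj_ee. f_equal; ring.
Qed.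

Lemma Cnorm2_geom_le K y : Cnorm2 (geom K y) <= INR K ^ 2.
Proof.
  rewrite <- Cnorm_sqr. apply pow_incr. split; [apply Cnorm_nonneg|].
  eapply Rle_trans; [apply Cnorm_clsum|].
  rewrite (lsum_ext _ _ (fun _ => 1)), lsum_const, length_seq, Rmult_1_r by (intros; apply Cnorm_ee).
  apply Rle_refl.
Qed.

Lemma sin_ge_div_PI s : 0 <= s <= PI / 2 -> s / PI <= sin s.
Proof.
  intros Hs. pose proof PI2_3_2. pose proof PI_4.
  destruct (sin_bound s 0) as [Hsin _]; try lra.
  unfold sin_approx, sin_term in Hsin. cbn in Hsin.
  assert (s / PI <= s / 3).
  { unfold Rdiv. apply Rmult_le_compat_l; [lra|]. apply Rinv_le_contravar; lra. }
  nra.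
Qed.

Lemma Cnorm2_ee_sub1 y : Cnorm2 (Cadd (ee y) (-1, 0)) = 2 - 2 * cos (2 * PI * y).
Proof.
  unfold Cnorm2, ee, Cadd; simpl. pose proof (sin2_cos2 (2 * PI * y)). unfold Rsqr in *. nra.
Qed.

Lemma Cnorm2_ee_sub1_ge y : Rabs y <= / 2 -> 4 * y ^ 2 <= Cnorm2 (Cadd (ee y) (-1, 0)).
Proof.
  intros Hy. rewrite Cnorm2_ee_sub1.
  replace (cos (2 * PI * y)) with (cos (2 * (PI * Rabs y))).
  2: { destruct (Rcase_abs y); [rewrite Rabs_left, <- cos_neg by lra|rewrite Rabs_right by lra];
       f_equal; ring. }
  rewrite cos_2a_sin. pose proof PI_RGT_0. pose proof (Rabs_pos y).
  assert (Rabs y <= sin (PI * Rabs y)).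
  { replace (Rabs y) with (PI * Rabs y / PI) at 1 by (field; lra).
    apply sin_ge_div_PI; split; nra. }
  rewrite <- pow2_abs. nra.
Qed.

Lemma Cnorm2_geom_le_inv K y n : Rabs (y + IZR n) <= / 2 -> y + IZR n <> 0 ->
  Cnorm2 (geom K y) <= / (y + IZR n) ^ 2.
Proof.
  intros H1 H2. pose proof (f_equal Cnorm2 (geom_telescope K y)) as E.
  rewrite Cnorm2_mul, <- (ee_add_IZR y n) in E.
  pose proof (Cnorm2_ee_sub1_ge _ H1).
  assert (Cnorm2 (Cadd (ee (INR K * y)) (-1, 0)) <= 4)
    by (rewrite Cnorm2_ee_sub1; pose proof (COS_bound (2 * PI * (INR K * y))); lra).
  assert (0 < (y + IZR n) ^ 2) by (rewrite <- Rsqr_pow2; apply Rsqr_pos_lt; auto).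
  pose proof (Cnorm2_nonneg (geom K y)).
  apply (Rmult_le_reg_l (4 * (y + IZR n) ^ 2)); [lra|].
  replace (4 * (y + IZR n) ^ 2 * / (y + IZR n) ^ 2) with 4 by (field; auto). nra.
Qed.

(** * Sums over well-spaced points *)

Lemma sum_inv_sqr_le n : lsum (seq 0 n) (fun j => / INR (S j) ^ 2) <= 2.
Proof.
  (* the partial sums up to [n] are at most [2 - 1/(n+1)], by [1/(k+1)^2 <= 1/k - 1/(k+1)] *)
  assert (H : forall n, lsum (seq 0 (S n)) (fun j => / INR (S j) ^ 2) <= 2 - / INR (S n)).
  { intros k; induction k as [|k IH].
    { unfold lsum; cbn -[INR]. rewrite (INR_1 : INR 1 = 1), !Rmult_1_l, Rinv_1; lra. }
    rewrite seq_S, lsum_app, Nat.add_0_l. unfold lsum at 2; cbn [fold_right map].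
    set (a := INR (S k)) in *.
    replace (INR (S (S k))) with (a + 1) by (unfold a; rewrite (S_INR (S k)); auto).
    assert (1 <= a) by (unfold a; rewrite S_INR; pose proof (pos_INR k); lra).
    assert (/ (a + 1) ^ 2 <= / a - / (a + 1)).
    { replace (/ a - / (a + 1)) with (/ (a * (a + 1))) by (field; lra).
      apply Rinv_le_contravar; nra. }
    lra. }
  destruct n; [cbn; lra|]. specialize (H n).
  assert (0 < / INR (S n)) by (apply Rinv_0_lt_compat, lt_0_INR; lia). lra.
Qed.

Lemma Int_part_div_abs_le s dl : 0 < dl -> (Rabs (IZR (Int_part (s / dl))) - 1) * dl <= Rabs s.
Proof.
  intros Hdl. destruct (base_Int_part (s / dl)) as [H1 H2].
  set (k := Int_part (s / dl)) in *.
  assert (E : s / dl * dl = s) by (field; lra).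
  apply (Rmult_le_compat_r dl) in H1; [|lra]. rewrite E in H1.
  assert (H3 : s < (IZR k + 1) * dl) by (rewrite <- E at 1; apply Rmult_lt_compat_r; lra).
  pose proof (Rle_abs s). pose proof (Rle_abs (- s)). rewrite Rabs_Ropp in *.
  destruct (Z_lt_le_dec k 0) as [Hk|Hk].
  - assert (IZR k <= -1) by (apply (IZR_le _ (-1)); lia).
    rewrite Rabs_left by lra. nra.
  - assert (0 <= IZR k) by (apply IZR_le; lia).
    rewrite Rabs_right by lra. nra.
Qed.

Definition centered (t : R) : R := t - IZR (Int_part (t + / 2)).

Lemma centered_bounds t : - / 2 <= centered t < / 2.
Proof. unfold centered. destruct (base_Int_part (t + / 2)). lra. Qed.

Lemma INR_Zabs_nat z : INR (Z.abs_nat z) = Rabs (IZR z).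
Proof. now rewrite INR_IZR_INZ, Zabs2Nat.id_abs, abs_IZR. Qed.

(* The bound on [Phi] at a point of bin [k]: [Aa] near the origin, and otherwise [Bb / t^2] with
   [|t| >= (k - 1) dl]. *)
Definition spacing_profile (Aa Bb dl : R) (k : nat) : R :=
  if (k <=? 1)%nat then Aa else Bb / (dl * (INR k - 1)) ^ 2.

Section Spacing.
Variables (Aa Bb dl : R).
Hypotheses (HA : 0 <= Aa) (HB : 0 <= Bb) (Hdl : 0 < dl).

Lemma spacing_profile_nonneg k : 0 <= spacing_profile Aa Bb dl k.
Proof.
  unfold spacing_profile. destruct (Nat.leb_spec k 1); auto.
  assert (1 < INR k) by (apply (lt_INR 1); lia).
  apply Rmult_le_pos; auto. apply Rlt_le, Rinv_0_lt_compat, pow_lt. nra.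
Qed.

Lemma spacing_profile_sum_le L : lsum (seq 0 L) (spacing_profile Aa Bb dl) <= 2 * Aa + 2 * Bb / dl ^ 2.
Proof.
  eapply Rle_trans; [apply (lsum_seq_mono L 2), spacing_profile_nonneg|].
  rewrite Nat.add_comm. cbn [seq Nat.add]. rewrite !lsum_cons, lsum_seq_shift.
  rewrite (lsum_ext _ _ (fun j => Bb / dl ^ 2 * / INR (S j) ^ 2)).
  2: { intros j _. unfold spacing_profile. destruct (Nat.leb_spec (2 + j) 1); [lia|].
       rewrite S_INR, plus_INR. simpl (INR 2). field. pose proof (pos_INR j). split; lra. }
  rewrite lsum_scal_l. unfold spacing_profile; cbn [Nat.leb].
  pose proof (sum_inv_sqr_le L).
  assert (0 <= Bb / dl ^ 2) by (apply Rmult_le_pos; auto; apply Rlt_le, Rinv_0_lt_compat, pow_lt; lra).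
  replace (2 * Bb / dl ^ 2) with (Bb / dl ^ 2 * 2) by (unfold Rdiv; ring). nra.
Qed.

Definition sym_range (L : nat) : list Z :=
  map (fun k => (- Z.of_nat k - 1)%Z) (seq 0 L) ++ map Z.of_nat (seq 0 L).

Lemma in_sym_range L b : (- Z.of_nat L <= b < Z.of_nat L)%Z -> In b (sym_range L).
Proof.
  intros Hb. unfold sym_range. apply in_or_app. destruct (Z_lt_le_dec b 0).
  - left. apply in_map_iff. exists (Z.to_nat (- b - 1)). split; [lia|]. apply in_seq. lia.
  - right. apply in_map_iff. exists (Z.to_nat b). split; [lia|]. apply in_seq. lia.
Qed.

Lemma spacing_profile_sym_range_le L :
  lsum (sym_range L) (fun b => spacing_profile Aa Bb dl (Z.abs_nat b)) <= 4 * Aa + 4 * Bb / dl ^ 2.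
Proof.
  unfold sym_range. rewrite lsum_app, !lsum_map.
  rewrite (lsum_ext _ _ (fun k => spacing_profile Aa Bb dl (1 + k))) by (intros; f_equal; lia).
  rewrite (lsum_ext _ (fun k => spacing_profile Aa Bb dl (Z.abs_nat (Z.of_nat k)))
                      (spacing_profile Aa Bb dl))
    by (intros; f_equal; lia).
  rewrite <- lsum_seq_shift.
  pose proof (spacing_profile_sum_le (S L)). pose proof (spacing_profile_sum_le L).
  pose proof (spacing_profile_nonneg 0). cbn [seq] in *. rewrite lsum_cons in *.
  replace (4 * Bb / dl ^ 2) with (2 * Bb / dl ^ 2 + 2 * Bb / dl ^ 2) by (unfold Rdiv; ring). lra.
Qed.

Variables (A : Type) (I : list A) (x : A -> R) (Phi : R -> R).
Hypothesis HI : NoDup I.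
Hypothesis Hsep :
  forall i j, In i I -> In j I -> i <> j -> forall n : Z, dl <= Rabs (x i - x j + IZR n).
Hypothesis HPhiA : forall t, Phi t <= Aa.
Hypothesis HPhiB :
  forall t n, Rabs (t + IZR n) <= / 2 -> t + IZR n <> 0 -> Phi t <= Bb / (t + IZR n) ^ 2.

Let bin (t : R) : Z := Int_part (centered t / dl).

Lemma Phi_le_spacing_profile t : Phi t <= spacing_profile Aa Bb dl (Z.abs_nat (bin t)).
Proof.
  unfold spacing_profile. destruct (Nat.leb_spec (Z.abs_nat (bin t)) 1) as [|Hk]; auto.
  rewrite INR_Zabs_nat. apply (lt_INR 1) in Hk. rewrite INR_Zabs_nat in Hk. cbn in Hk.
  pose proof (Int_part_div_abs_le (centered t) dl Hdl) as Hsd. fold (bin t) in Hsd.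
  pose proof (centered_bounds t) as Hc.
  assert (Ec : centered t = t + IZR (- Int_part (t + / 2))) by (unfold centered; rewrite opp_IZR; ring).
  assert (Hpos : 0 < (Rabs (IZR (bin t)) - 1) * dl) by nra.
  eapply Rle_trans; [apply (HPhiB t (- Int_part (t + / 2)))|]; rewrite <- Ec.
  - apply Rabs_le; lra.
  - intros E; rewrite E, Rabs_R0 in Hsd; lra.
  - unfold Rdiv. rewrite (Rmult_comm dl).
    apply Rmult_le_compat_l; auto. apply Rinv_le_contravar; [apply pow_lt; lra|].
    rewrite <- (pow2_abs (centered t)). apply pow_incr. lra.
Qed.

Lemma bin_range t : let L := Z.to_nat (up (/ dl)) in (- Z.of_nat L <= bin t < Z.of_nat L)%Z.
Proof.
  intros L. pose proof (centered_bounds t). destruct (base_Int_part (centered t / dl)) as [H1 H2].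
  fold (bin t) in H1, H2. destruct (archimed (/ dl)) as [Hu _].
  assert (0 < / dl) by (apply Rinv_0_lt_compat; auto).
  assert (Hs : - / 2 * / dl <= centered t / dl < / 2 * / dl).
  { unfold Rdiv. split; [apply Rmult_le_compat_r|apply Rmult_lt_compat_r]; lra. }
  assert (0 < up (/ dl))%Z by (apply lt_IZR; lra).
  unfold L. rewrite Z2Nat.id by lia. split.
  - apply Z.lt_pred_le, lt_IZR. rewrite <- Z.sub_1_r, minus_IZR, opp_IZR. lra.
  - apply lt_IZR. lra.
Qed.

Lemma bin_inj y i j : In i I -> In j I -> bin (x i - y) = bin (x j - y) -> i = j.
Proof.
  intros Hi Hj E. destruct (classic (i = j)) as [|Hne]; auto. exfalso.
  pose proof (Hsep i j Hi Hj Hne (Int_part (x j - y + / 2) - Int_part (x i - y + / 2))) as Hd.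
  replace (x i - x j + IZR (Int_part (x j - y + / 2) - Int_part (x i - y + / 2)))
    with (centered (x i - y) - centered (x j - y)) in Hd by (unfold centered; rewrite minus_IZR; ring).
  destruct (base_Int_part (centered (x i - y) / dl)), (base_Int_part (centered (x j - y) / dl)).
  fold (bin (x i - y)) (bin (x j - y)) in *. rewrite E in *.
  assert (Rabs (centered (x i - y) / dl - centered (x j - y) / dl) < 1) by (apply Rabs_def1; lra).
  replace (centered (x i - y) / dl - centered (x j - y) / dl)
    with ((centered (x i - y) - centered (x j - y)) / dl) in H3 by (field; lra).
  unfold Rdiv in H3. rewrite Rabs_mult, (Rabs_right (/ dl)) in H3
    by (apply Rle_ge, Rlt_le, Rinv_0_lt_compat; lra).
  apply (Rmult_lt_compat_r dl) in H3; [|lra]. rewrite Rmult_assoc, Rinv_l in H3; lra.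
Qed.

Lemma spacing_sum_le y : lsum I (fun i => Phi (x i - y)) <= 4 * Aa + 4 * Bb / dl ^ 2.
Proof.
  eapply Rle_trans; [apply lsum_le; intros i _; apply Phi_le_spacing_profile|].
  eapply Rle_trans; [|apply (spacing_profile_sym_range_le (Z.to_nat (up (/ dl))))].
  apply (lsum_inj_le I _ (fun i => bin (x i - y))
                         (fun b => spacing_profile Aa Bb dl (Z.abs_nat b))); auto.
  - intros i j Hi Hj; apply bin_inj; auto.
  - intros i _. apply in_sym_range, bin_range.
  - intros; apply spacing_profile_nonneg.
Qed.

End Spacing.

(** * The large sieve *)

Lemma lsum_Cnorm2_expand_le {A B} (T : list B) (I : list A) (phi : B -> R) (y : A -> R) (b : A -> Cx) :
  lsum T (fun t => Cnorm2 (clsum I (fun r => Cmul (b r) (ee (phi t * y r)))))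
  <= lsum I (fun r => lsum I (fun s =>
       Cnorm (b r) * Cnorm (clsum T (fun t => ee (phi t * (y r - y s)))) * Cnorm (b s))).
Proof.
  rewrite (lsum_ext _ _ (fun t => lsum I (fun r => lsum I (fun s =>
             Cdot (Cmul (b r) (ee (phi t * (y r - y s)))) (b s))))).
  2: { intros t _. rewrite Cnorm2_clsum. apply lsum_ext; intros r _; apply lsum_ext; intros s _.
       rewrite Cdot_ee_move. do 3 f_equal. ring. }
  rewrite lsum_swap. apply lsum_le; intros r _. rewrite lsum_swap. apply lsum_le; intros s _.
  rewrite <- Cdot_clsum_l, <- Cmul_clsum_l, <- Cnorm_mul. apply Cdot_le.
Qed.

Lemma schur_test {A} (I : list A) (w : A -> R) (K : A -> A -> R) (C : R) :
  (forall r s, 0 <= K r s) ->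
  (forall r, In r I -> lsum I (fun s => K r s) <= C) ->
  (forall s, In s I -> lsum I (fun r => K r s) <= C) ->
  lsum I (fun r => lsum I (fun s => w r * K r s * w s)) <= C * lsum I (fun r => w r ^ 2).
Proof.
  intros HK Hrow Hcol.
  apply Rle_trans with
    (lsum I (fun r => lsum I (fun s => / 2 * (w r ^ 2 * K r s) + / 2 * (w s ^ 2 * K r s)))).
  { apply lsum_le; intros r _; apply lsum_le; intros s _.
    pose proof (HK r s). assert (0 <= (w r - w s) ^ 2) by apply pow2_ge_0. nra. }
  rewrite (lsum_ext _ _ (fun r => / 2 * (w r ^ 2 * lsum I (fun s => K r s))
                                 + / 2 * lsum I (fun s => w s ^ 2 * K r s)))
    by (intros; rewrite lsum_plus, !lsum_scal_l; reflexivity).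
  rewrite lsum_plus, !lsum_scal_l, (lsum_swap I I).
  rewrite (lsum_ext _ (fun s => lsum I (fun r => w s ^ 2 * K r s))
                      (fun s => w s ^ 2 * lsum I (fun r => K r s)))
    by (intros; apply lsum_scal_l).
  assert (H1 : lsum I (fun r => w r ^ 2 * lsum I (fun s => K r s)) <= C * lsum I (fun r => w r ^ 2)).
  { rewrite <- lsum_scal_l. apply lsum_le; intros r Hr.
    pose proof (Hrow r Hr). pose proof (pow2_ge_0 (w r)). nra. }
  assert (H2 : lsum I (fun s => w s ^ 2 * lsum I (fun r => K r s)) <= C * lsum I (fun r => w r ^ 2)).
  { rewrite <- lsum_scal_l. apply lsum_le; intros s Hs.
    pose proof (Hcol s Hs). pose proof (pow2_ge_0 (w s)). nra. }
  lra.
Qed.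

Lemma lsum_window_le (g : nat -> R) N : (forall t, 0 <= g t) ->
  INR N * lsum (seq 0 N) (fun u => g (N + u)%nat)
  <= lsum (list_prod (seq 0 (2 * N)) (seq 0 (2 * N))) (fun p => g (fst p + snd p)%nat).
Proof.
  intros Hg. rewrite lsum_list_prod, <- (length_seq N 0) at 1. rewrite <- lsum_const.
  replace (2 * N)%nat with (N + N)%nat at 1 by lia.
  eapply Rle_trans; [|apply lsum_seq_mono; intros; apply lsum_nonneg; auto].
  apply lsum_le; intros i Hi. apply in_seq in Hi. cbn [fst snd].
  (* for [i <= N], the sums [i + j] with [N - i <= j < 2N - i] run through [N, 2N) *)
  replace (2 * N)%nat with ((N - i) + N + i)%nat by lia.
  eapply Rle_trans; [|apply lsum_seq_mono; auto].
  rewrite seq_app, lsum_app, (lsum_seq_shift (0 + (N - i))).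
  pose proof (lsum_nonneg (seq 0 (N - i)) (fun j => g (i + j)%nat) (fun j _ => Hg _)).
  rewrite (lsum_ext _ (fun u => g (i + (0 + (N - i) + u))%nat) (fun u => g (N + u)%nat))
    by (intros; f_equal; lia).
  lra.
Qed.

Lemma clsum_ee_pair_sums K c D :
  clsum (list_prod (seq 0 K) (seq 0 K)) (fun p => ee ((INR (fst p + snd p) - c) * (D)))
  = Cmul (ee (- c * D)) (Cmul (geom K D) (geom K D)).
Proof.
  unfold geom. rewrite clsum_list_prod, Cmul_clsum_r, Cmul_clsum_l. apply clsum_ext; intros i _.
  rewrite Cmul_clsum_l, Cmul_clsum_l. apply clsum_ext; intros j _. cbn [fst snd].
  rewrite plus_INR. replace ((INR i + INR j - c) * D) with (- c * D + (INR i * D + INR j * D)) by ring.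
  now rewrite !ee_add.
Qed.

Lemma le_of_le_sqrt_mul a c X : 0 <= a -> 0 <= c -> 0 <= X -> X <= sqrt a * sqrt (c * X) -> X <= c * a.
Proof.
  intros Ha Hc HX H. destruct (Req_dec X 0) as [->|HX0]; [nra|].
  assert (Hp : 0 <= c * X) by (apply Rmult_le_pos; auto).
  rewrite <- sqrt_mult in H by auto.
  assert (X ^ 2 <= a * (c * X)).
  { rewrite <- (sqrt_sqrt (a * (c * X))) by (apply Rmult_le_pos; auto). simpl. rewrite Rmult_1_r.
    apply Rmult_le_compat; lra. }
  apply (Rmult_le_reg_r X); [lra|]. simpl in *. lra.
Qed.

Section LargeSieve.
Variables (A : Type) (I : list A) (N : nat).
Hypotheses (HI : NoDup I) (HN : (1 <= N)%nat).

Let Phi (t : R) : R := Cnorm2 (geom (2 * N) t).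

Lemma Phi_opp t : Phi (- t) = Phi t.
Proof. unfold Phi. now rewrite geom_neg, Cnorm2_conj. Qed.

Section Dual.
Variables (y : A -> R) (b : A -> Cx).
Hypothesis Hsep :
  forall i j, In i I -> In j I -> i <> j -> forall n : Z, / INR N <= Rabs (y i - y j + IZR n).

Lemma Phi_sum_le z : lsum I (fun i => Phi (y i - z)) <= 20 * INR N ^ 2.
Proof.
  assert (HNp : 0 < INR N) by (apply lt_0_INR; lia).
  eapply Rle_trans; [apply (spacing_sum_le (INR (2 * N) ^ 2) 1 (/ INR N) (pow2_ge_0 _) Rle_0_1
    (Rinv_0_lt_compat _ HNp) A I y Phi HI Hsep)|].
  - intros; apply Cnorm2_geom_le.
  - intros t n Ht Hn. unfold Rdiv, Phi. rewrite Rmult_1_l. now apply Cnorm2_geom_le_inv.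
  - rewrite mult_INR. cbn [INR]. right; field; lra.
Qed.

Lemma large_sieve_dual :
  lsum (seq 0 N) (fun u => Cnorm2 (clsum I (fun i => Cmul (b i) (ee (INR u * y i)))))
  <= 20 * INR N * lsum I (fun i => Cnorm2 (b i)).
Proof.
  assert (HNp : 0 < INR N) by (apply lt_0_INR; lia).
  set (g := fun t : nat => Cnorm2 (clsum I (fun i => Cmul (b i) (ee ((INR t - INR N) * y i))))).
  assert (Hwin := lsum_window_le g N (fun t => Cnorm2_nonneg _)).
  rewrite (lsum_ext _ (fun u => g (N + u)%nat)
             (fun u => Cnorm2 (clsum I (fun i => Cmul (b i) (ee (INR u * y i)))))) in Hwin.
  2: { intros u _. unfold g. rewrite plus_INR. f_equal. apply clsum_ext; intros.
       do 3 f_equal. ring. }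
  pose proof (lsum_Cnorm2_expand_le (list_prod (seq 0 (2 * N)) (seq 0 (2 * N))) I
    (fun p => INR (fst p + snd p) - INR N) y b) as Hexp.
  rewrite (lsum_ext I (fun r => lsum I (fun s => Cnorm (b r) * Cnorm (clsum _ _) * Cnorm (b s)))
    (fun r => lsum I (fun s => Cnorm (b r) * Phi (y r - y s) * Cnorm (b s)))) in Hexp.
  2: { intros r _; apply lsum_ext; intros s _. rewrite clsum_ee_pair_sums, !Cnorm_mul, Cnorm_ee.
       unfold Phi. rewrite <- Cnorm_sqr. ring. }
  pose proof (schur_test I (fun r => Cnorm (b r)) (fun r s => Phi (y r - y s)) (20 * INR N ^ 2)
    (fun _ _ => Cnorm2_nonneg _)) as Hschur. cbv beta in Hschur.
  rewrite (lsum_ext I (fun r => Cnorm (b r) ^ 2) (fun r => Cnorm2 (b r))) in Hschur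
    by (intros; apply Cnorm_sqr).
  assert (H := Hschur ltac:(intros r _; rewrite (lsum_ext _ _ (fun s => Phi (y s - y r)))
                 by (intros; rewrite <- Phi_opp; f_equal; ring); apply Phi_sum_le)
                ltac:(intros s _; apply Phi_sum_le)).
  apply (Rmult_le_reg_l (INR N)); auto.
  replace (INR N * (20 * INR N * lsum I (fun i => Cnorm2 (b i))))
    with (20 * INR N ^ 2 * lsum I (fun i => Cnorm2 (b i))) by ring.
  unfold g in Hwin. cbv beta in Hexp. lra.
Qed.

End Dual.

Lemma large_sieve (x : A -> R) (a : nat -> Cx) :
  (forall i j, In i I -> In j I -> i <> j -> forall n : Z, / INR N <= Rabs (x i - x j + IZR n)) ->
  lsum I (fun i => Cnorm2 (clsum (seq 0 N) (fun u => Cmul (a u) (ee (INR u * x i)))))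
  <= 20 * INR N * lsum (seq 0 N) (fun u => Cnorm2 (a u)).
Proof.
  intros Hsep.
  set (T := fun i => clsum (seq 0 N) (fun u => Cmul (a u) (ee (INR u * x i)))).
  set (X := lsum I (fun i => Cnorm2 (T i))).
  set (B := fun u : nat => clsum I (fun i => Cmul (T i) (ee (INR u * - x i)))).
  assert (HX : X = lsum (seq 0 N) (fun u => Cdot (a u) (B u))).
  { unfold X.
    rewrite (lsum_ext _ _ (fun i => lsum (seq 0 N)
               (fun u => Cdot (Cmul (a u) (ee (INR u * x i))) (T i)))).
    2: { intros i _. change (Cnorm2 (T i)) with (Cdot (T i) (T i)). unfold T at 1. apply Cdot_clsum_l. }
    rewrite lsum_swap. apply lsum_ext; intros u _. unfold B. rewrite Cdot_clsum_r.
    apply lsum_ext; intros i _. rewrite <- (Rmult_1_r (INR u * - x i)).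
    rewrite <- (Cdot_rotate (a u) _ (INR u * x i)), Cmul_assoc, <- ee_add.
    replace (INR u * - x i * 1 + INR u * x i) with 0 by ring.
    rewrite ee_0. destruct (T i); unfold Cmul; simpl. f_equal; f_equal; ring. }
  assert (HB : lsum (seq 0 N) (fun u => Cnorm2 (B u)) <= 20 * INR N * X).
  { apply large_sieve_dual. intros i j Hi Hj Hne n.
    replace (- x i - - x j + IZR n) with (x j - x i + IZR n) by ring. apply Hsep; auto. }
  assert (H1 : X <= sqrt (lsum (seq 0 N) (fun u => Cnorm2 (a u))) * sqrt (20 * INR N * X)).
  { rewrite HX at 1. eapply Rle_trans; [apply lsum_le; intros u _; apply Cdot_le|].
    eapply Rle_trans; [apply lsum_Cauchy_Schwarz|].
    rewrite (lsum_ext _ (fun u => Cnorm (a u) ^ 2) (fun u => Cnorm2 (a u)))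
      by (intros; apply Cnorm_sqr).
    rewrite (lsum_ext _ (fun u => Cnorm (B u) ^ 2) (fun u => Cnorm2 (B u)))
      by (intros; apply Cnorm_sqr).
    apply Rmult_le_compat_l; [apply sqrt_pos|]. now apply sqrt_le_1_alt. }
  assert (0 <= X) by (apply lsum_nonneg; intros; apply Cnorm2_nonneg).
  assert (0 <= lsum (seq 0 N) (fun u => Cnorm2 (a u)))
    by (apply lsum_nonneg; intros; apply Cnorm2_nonneg).
  assert (0 < INR N) by (apply lt_0_INR; lia).
  apply le_of_le_sqrt_mul; auto; lra.
Qed.

End LargeSieve.

(** * Roots of unity and reduced fractions *)

Lemma inv_le_Rabs_IZR_div (z : Z) D N : z <> 0%Z -> 0 < D <= N -> / N <= Rabs (IZR z / D).
Proof.
  intros Hz HD. assert (1 <= Rabs (IZR z)) by (rewrite <- abs_IZR; apply (IZR_le 1); lia).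
  unfold Rdiv. rewrite Rabs_mult, (Rabs_right (/ D)) by (apply Rle_ge, Rlt_le, Rinv_0_lt_compat; lra).
  assert (/ N <= / D) by (apply Rinv_le_contravar; lra).
  assert (0 < / D) by (apply Rinv_0_lt_compat; lra). nra.
Qed.

Lemma dft_Cnorm2_sum_le (H : nat) (g : nat -> Cx) : (1 <= H)%nat -> (forall w, Cnorm2 (g w) <= 1) ->
  lsum (seq 0 H) (fun h => Cnorm2 (Cscale (/ INR H)
    (clsum (seq 0 H) (fun w => Cmul (g w) (ee (- (INR h * INR w) / INR H)))))) <= 20.
Proof.
  intros HH Hg. assert (HHp : 0 < INR H) by (apply lt_0_INR; lia).
  rewrite (lsum_ext _ _ (fun h => (/ INR H) ^ 2 *
    Cnorm2 (clsum (seq 0 H) (fun w => Cmul (g w) (ee (INR w * (- INR h / INR H))))))).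
  2: { intros h _. rewrite Cnorm2_scale. do 2 f_equal. apply clsum_ext; intros.
       do 2 f_equal. field. lra. }
  rewrite lsum_scal_l.
  assert (Hls : lsum (seq 0 H) (fun h => Cnorm2 (clsum (seq 0 H)
                  (fun w => Cmul (g w) (ee (INR w * (- INR h / INR H))))))
                <= 20 * INR H * lsum (seq 0 H) (fun w => Cnorm2 (g w))).
  { apply large_sieve; auto using seq_NoDup. intros h h' Hh Hh' Hne n.
    apply in_seq in Hh, Hh'.
    replace (- INR h / INR H - - INR h' / INR H + IZR n)
      with (IZR (Z.of_nat h' - Z.of_nat h + n * Z.of_nat H) / INR H)
      by (rewrite plus_IZR, minus_IZR, mult_IZR, <- !INR_IZR_INZ; field; lra).
    apply inv_le_Rabs_IZR_div; [|lra].
    intros E. apply Hne. destruct (Z.eq_dec n 0) as [->|Hn]; [lia|].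
    exfalso. destruct (Z_lt_le_dec n 0); nia. }
  assert (lsum (seq 0 H) (fun w => Cnorm2 (g w)) <= INR H).
  { eapply Rle_trans; [apply lsum_le; intros; apply Hg|]. rewrite lsum_const, length_seq. lra. }
  apply (Rmult_le_reg_l (INR H ^ 2)); [apply pow_lt; lra|].
  rewrite <- Rmult_assoc, <- Rpow_mult_distr, Rinv_r, pow1, Rmult_1_l by lra. nra.
Qed.

Lemma reduced_fraction_sep_num (m k m' k' : nat) (n : Z) : (k < m)%nat -> (k' < m')%nat ->
  Nat.gcd k m = 1%nat -> Nat.gcd k' m' = 1%nat -> (m, k) <> (m', k') ->
  (Z.of_nat k * Z.of_nat m' - Z.of_nat k' * Z.of_nat m + n * Z.of_nat m * Z.of_nat m')%Z <> 0%Z.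
Proof.
  intros H1 H2 G1 G2 Hne Hz.
  assert (Hn : n = 0%Z).
  { (* [|k m' - k' m| < m m'], so no nonzero multiple of [m m'] can cancel it *)
    destruct (Z.eq_dec n 0) as [|Hn]; auto. exfalso.
    assert (Z.of_nat k * Z.of_nat m' < Z.of_nat m * Z.of_nat m')%Z by nia.
    assert (Z.of_nat k' * Z.of_nat m < Z.of_nat m * Z.of_nat m')%Z by nia.
    destruct (Z_lt_le_dec n 0).
    - assert (n * Z.of_nat m * Z.of_nat m' <= - (Z.of_nat m * Z.of_nat m'))%Z by nia. lia.
    - assert (Z.of_nat m * Z.of_nat m' <= n * Z.of_nat m * Z.of_nat m')%Z by nia. lia. }
  subst n. assert (E : (k * m' = k' * m)%nat) by lia.
  assert (D1 : Nat.divide m m').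
  { apply (Nat.gauss m k m'); [exists k'; lia|]. now rewrite Nat.gcd_comm. }
  assert (D2 : Nat.divide m' m).
  { apply (Nat.gauss m' k' m); [exists k; lia|]. now rewrite Nat.gcd_comm. }
  assert (m = m') by (apply Nat.divide_antisym; auto). subst m'.
  apply Hne. f_equal. nia.
Qed.

Lemma reduced_fractions_separated (m k m' k' : nat) (n : Z) : (k < m)%nat -> (k' < m')%nat ->
  Nat.gcd k m = 1%nat -> Nat.gcd k' m' = 1%nat -> (m, k) <> (m', k') ->
  / (INR m * INR m') <= Rabs (INR k / INR m - INR k' / INR m' + IZR n).
Proof.
  intros H1 H2 G1 G2 Hne.
  assert (0 < INR m) by (apply lt_0_INR; lia). assert (0 < INR m') by (apply lt_0_INR; lia).
  replace (INR k / INR m - INR k' / INR m' + IZR n)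
    with (IZR (Z.of_nat k * Z.of_nat m' - Z.of_nat k' * Z.of_nat m + n * Z.of_nat m * Z.of_nat m')
          / (INR m * INR m'))
    by (rewrite plus_IZR, minus_IZR, !mult_IZR, <- !INR_IZR_INZ; field; lra).
  apply inv_le_Rabs_IZR_div; [now apply reduced_fraction_sep_num|]. split; nra.
Qed.

Definition in_window (lo hi : R) (m : nat) : bool :=
  if Rle_dec lo (INR m) then if Rlt_dec (INR m) hi then true else false else false.

Lemma in_window_spec lo hi m : in_window lo hi m = true <-> lo <= INR m < hi.
Proof.
  unfold in_window. destruct (Rle_dec lo (INR m)), (Rlt_dec (INR m) hi); split; intros; try lra; easy.
Qed.

(* Pairs [(m, k)] encoding the reduced fractions [k/m] in [0, 1) with [lo <= m < hi] and [m < n]. *)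
Definition farey_pairs (lo hi : R) (n : nat) : list (nat * nat) :=
  flat_map (fun m => if in_window lo hi m
                     then map (pair m) (filter (fun k => Nat.gcd k m =? 1) (seq 0 m)) else nil)
           (seq 0 n).

Lemma lsum_farey_pairs lo hi n (F : nat * nat -> R) :
  lsum (farey_pairs lo hi n) F
  = lsum (seq 0 n) (fun m => if in_window lo hi m
       then lsum (seq 0 m) (fun k => if Nat.gcd k m =? 1 then F (m, k) else 0) else 0).
Proof.
  unfold farey_pairs. rewrite lsum_flat_map. apply lsum_ext; intros m _.
  destruct (in_window lo hi m); [|reflexivity]. now rewrite lsum_map, lsum_filter.
Qed.

Lemma in_farey_pairs lo hi n m k : In (m, k) (farey_pairs lo hi n) ->
  lo <= INR m < hi /\ (k < m)%nat /\ Nat.gcd k m = 1%nat.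
Proof.
  unfold farey_pairs. intros Hin. apply in_flat_map in Hin as (m0 & _ & Hin).
  destruct (in_window lo hi m0) eqn:E; [|destruct Hin].
  apply in_map_iff in Hin as (k0 & Ek & Hk). injection Ek as <- <-.
  apply filter_In in Hk as [Hk Hg]. apply in_seq in Hk. apply Nat.eqb_eq in Hg.
  apply in_window_spec in E. repeat split; try apply E; auto; lia.
Qed.

Lemma NoDup_farey_pairs lo hi n : NoDup (farey_pairs lo hi n).
Proof.
  unfold farey_pairs. induction (seq_NoDup n 0) as [|m l Hm _ IH]; [constructor|].
  cbn [flat_map]. apply NoDup_app; auto.
  - destruct (in_window lo hi m); [|constructor].
    apply Injective_map_NoDup; [intros ? ? E; now injection E|].
    apply NoDup_filter, seq_NoDup.
  - intros p Hp Hp'. destruct (in_window lo hi m); [|destruct Hp].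
    apply in_map_iff in Hp as (k & <- & _). apply in_flat_map in Hp' as (m' & Hm' & Hp').
    destruct (in_window lo hi m'); [|destruct Hp'].
    apply in_map_iff in Hp' as (k' & E & _). injection E as -> _. contradiction.
Qed.

Definition inv_gap_from (a : R) (m : nat) : R :=
  if Rle_dec a (INR m) then / INR m - / (INR m + 1) else 0.

Lemma sum_inv_gap_from_le (a : R) n : 0 < a -> lsum (seq 0 n) (inv_gap_from a) <= / a.
Proof.
  intros Ha. enough (H : lsum (seq 0 n) (inv_gap_from a) <= / a - / Rmax (INR n) a).
  { assert (0 < / Rmax (INR n) a)
      by (apply Rinv_0_lt_compat; eapply Rlt_le_trans; [|apply Rmax_r]; lra).
    lra. }
  induction n.
  - rewrite Rmax_right by (cbn; lra). cbn; lra.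
  - rewrite seq_S, lsum_app, Nat.add_0_l, lsum_cons, S_INR. unfold lsum at 2; cbn [map fold_right].
    unfold inv_gap_from at 2. destruct (Rle_dec a (INR n)).
    + rewrite Rmax_left in IHn by lra. rewrite Rmax_left by lra. lra.
    + rewrite Rmax_right in IHn by lra.
      assert (/ Rmax (INR n + 1) a <= / a) by (apply Rinv_le_contravar; [lra|apply Rmax_r]). lra.
Qed.

Lemma sum_inv_window_le (b Q : R) n : 0 < b -> 1 <= Q ->
  lsum (seq 0 n) (fun m => if in_window (b / Q) b m then / INR m else 0) <= Q + 1.
Proof.
  intros Hb HQ. set (a := Rmax (b / Q) 1).
  assert (Ha : 1 <= a) by apply Rmax_r.
  (* [1/m <= (b + 1) (1/m - 1/(m+1))] for [m < b], and the latter sum telescopes *)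
  apply Rle_trans with ((b + 1) * lsum (seq 0 n) (inv_gap_from a)).
  { rewrite <- lsum_scal_l. apply lsum_le; intros m _. unfold inv_gap_from.
    destruct (in_window (b / Q) b m) eqn:E.
    - apply in_window_spec in E as [E1 E2].
      assert (Hbq : 0 < b / Q) by (apply Rdiv_lt_0_compat; lra).
      assert (Hma : a <= INR m).
      { apply Rmax_lub; auto. destruct m; [cbn in *; lra|].
        rewrite S_INR; pose proof (pos_INR m); lra. }
      destruct (Rle_dec a (INR m)); [|lra].
      replace (/ INR m - / (INR m + 1)) with (/ INR m * / (INR m + 1)) by (field; lra).
      replace (/ INR m) with (/ INR m * / (INR m + 1) * (INR m + 1)) at 1 by (field; lra).
      rewrite (Rmult_comm (b + 1)). apply Rmult_le_compat_l; [|lra].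
      apply Rmult_le_pos; apply Rlt_le, Rinv_0_lt_compat; lra.
    - destruct (Rle_dec a (INR m)); [|lra].
      assert (/ (INR m + 1) <= / INR m) by (apply Rinv_le_contravar; lra). nra. }
  eapply Rle_trans; [apply Rmult_le_compat_l; [lra|apply sum_inv_gap_from_le; lra]|].
  unfold a. destruct (Rle_dec (b / Q) 1).
  - rewrite Rmax_right, Rinv_1 by auto.
    assert (b <= Q)
      by (apply (Rmult_le_reg_r (/ Q)); [apply Rinv_0_lt_compat; lra|]; rewrite Rinv_r; lra).
    lra.
  - rewrite Rmax_left by lra. replace ((b + 1) * / (b / Q)) with (Q + Q / b) by (field; lra).
    assert (Q / b <= 1); [|lra].
    assert (Q < b)
      by (apply (Rmult_lt_reg_r (/ Q)); [apply Rinv_0_lt_compat; lra|]; rewrite Rinv_r; lra).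
    apply (Rmult_le_reg_r b); auto. unfold Rdiv. rewrite Rmult_assoc, Rinv_l; lra.
Qed.

Section FareySieve.
Variables (Q b shift : R) (N n : nat).
Hypotheses (HQ : 1 <= Q) (Hb : 0 < b) (HbN : b ^ 2 <= INR N) (HN : (1 <= N)%nat).

Let F := farey_pairs (b / Q) b n.
Let point (p : nat * nat) : R := INR (snd p) / INR (fst p) - shift.

Lemma farey_pairs_denom_pos m k : In (m, k) F -> 0 < INR m < b.
Proof.
  intros Hin. destruct (in_farey_pairs _ _ _ _ _ Hin) as [[H1 H2] _].
  split; auto. eapply Rlt_le_trans; [|apply H1]. apply Rdiv_lt_0_compat; lra.
Qed.

Lemma farey_weight_le : lsum F (fun p => (/ INR (fst p)) ^ 2) <= Q + 1.
Proof.
  eapply Rle_trans; [|apply (sum_inv_window_le b Q n Hb HQ)].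
  unfold F. rewrite lsum_farey_pairs. apply lsum_le; intros m _.
  destruct (in_window (b / Q) b m) eqn:E; [|apply Rle_refl].
  apply in_window_spec in E as [E _].
  assert (0 < INR m) by (eapply Rlt_le_trans; [|apply E]; apply Rdiv_lt_0_compat; lra).
  apply Rle_trans with (lsum (seq 0 m) (fun _ => (/ INR m) ^ 2)).
  { apply lsum_le; intros k _. destruct (Nat.gcd k m =? 1); [apply Rle_refl|apply pow2_ge_0]. }
  rewrite lsum_const, length_seq. right. field. lra.
Qed.

Lemma farey_points_separated p p' (z : Z) : In p F -> In p' F -> p <> p' ->
  / INR N <= Rabs (point p - point p' + IZR z).
Proof.
  destruct p as [m k], p' as [m' k']. intros Hp Hp' Hne.
  destruct (in_farey_pairs _ _ _ _ _ Hp) as (_ & K1 & G1).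
  destruct (in_farey_pairs _ _ _ _ _ Hp') as (_ & K2 & G2).
  pose proof (farey_pairs_denom_pos _ _ Hp). pose proof (farey_pairs_denom_pos _ _ Hp').
  unfold point; cbn [fst snd].
  replace (INR k / INR m - shift - (INR k' / INR m' - shift) + IZR z)
    with (INR k / INR m - INR k' / INR m' + IZR z) by ring.
  eapply Rle_trans; [|apply reduced_fractions_separated; auto].
  apply Rinv_le_contravar; [nra|]. simpl in HbN. nra.
Qed.

Lemma farey_large_sieve_sum_le (H : nat) (c : nat -> nat -> Cx) (C0 : R) : 0 <= C0 ->
  (forall u, lsum (seq 0 H) (fun h => Cnorm2 (c u h)) <= C0) ->
  lsum (seq 0 H) (fun h => lsum F (fun p =>
     / INR (fst p) * Cnorm (clsum (seq 0 N) (fun u => Cmul (c u h) (ee (INR u * point p))))))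
  <= sqrt (20 * (Q + 1)) * sqrt (C0 * INR H) * INR N.
Proof.
  intros HC0 Hc. set (X h := lsum (seq 0 N) (fun u => Cnorm2 (c u h))).
  assert (HX : forall h, 0 <= X h) by (intros; apply lsum_nonneg; intros; apply Cnorm2_nonneg).
  assert (HNp : 0 <= INR N) by apply pos_INR.
  apply Rle_trans with (lsum (seq 0 H) (fun h => sqrt (Q + 1) * sqrt (20 * INR N) * sqrt (X h))).
  { apply lsum_le; intros h _.
    eapply Rle_trans; [apply lsum_Cauchy_Schwarz|].
    rewrite Rmult_assoc, <- (sqrt_mult (20 * INR N)) by (auto; lra).
    apply Rmult_le_compat; try apply sqrt_pos; apply sqrt_le_1_alt; [apply farey_weight_le|].
    rewrite (lsum_ext _ (fun p => Cnorm _ ^ 2) (fun p => Cnorm2 (clsum (seq 0 N)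
               (fun u => Cmul (c u h) (ee (INR u * point p)))))) by (intros; apply Cnorm_sqr).
    apply large_sieve; [apply NoDup_farey_pairs|auto|]. intros; now apply farey_points_separated. }
  rewrite lsum_scal_l.
  eapply Rle_trans; [apply Rmult_le_compat_l; [|apply lsum_sqrt_le; auto]|].
  { apply Rmult_le_pos; apply sqrt_pos. }
  rewrite length_seq.
  assert (Hsum : lsum (seq 0 H) X <= INR N * C0).
  { unfold X. rewrite lsum_swap. eapply Rle_trans; [apply lsum_le; intros; apply Hc|].
    rewrite lsum_const, length_seq. lra. }
  apply sqrt_le_1_alt in Hsum.
  assert (E : sqrt (Q + 1) * sqrt (20 * INR N) * (sqrt (INR H) * sqrt (INR N * C0))
              = sqrt (20 * (Q + 1)) * sqrt (C0 * INR H) * (sqrt (INR N) * sqrt (INR N))).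
  { pose proof (pos_INR H). rewrite !sqrt_mult by lra. ring. }
  rewrite sqrt_sqrt in E by auto.
  rewrite <- E. apply Rmult_le_compat_l; [apply Rmult_le_pos; apply sqrt_pos|].
  apply Rmult_le_compat_l; [apply sqrt_pos|auto].
Qed.

End FareySieve.

(** * The sum S(M, d, l) *)

Lemma Ssum_eq_farey_sum q P alpha mu nu M d kappa rho1 l theta :
  (1 <= q)%nat -> (0 < M)%Z -> (1 <= d)%Z ->
  Ssum q P alpha mu nu M d kappa rho1 l theta
  = lsum (seq 0 (q ^ rho1)) (fun h =>
      lsum (farey_pairs (IZR M / IZR d / INR q) (IZR M / IZR d) (Z.to_nat M)) (fun p =>
        / INR (fst p) * Cnorm (clsum (seq 0 (q ^ kappa)) (fun u =>
          Cmul (cfun q P alpha kappa rho1 l u h)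
               (ee (INR u * (INR (snd p) / INR (fst p) - theta / powerRZ (INR q) (mu + nu)))))))).
Proof.
  intros Hq HM Hd.
  assert (Hq0 : 0 < INR q) by (apply lt_0_INR; lia).
  assert (HM0 : 0 < IZR M) by (apply IZR_lt; lia).
  assert (Hd0 : 1 <= IZR d) by (apply IZR_le; lia).
  assert (Hpw : 0 < powerRZ (INR q) (mu + nu)) by (apply powerRZ_lt; lra).
  unfold Ssum. rewrite rsum_lsum. apply lsum_ext; intros h _.
  rewrite rsum_lsum, lsum_farey_pairs. apply lsum_ext; intros m _.
  replace (IZR M / IZR d / INR q) with (IZR M / (INR q * IZR d)) by (field; lra).
  unfold in_window. destruct (Rle_dec (IZR M / (INR q * IZR d)) (INR m)) as [Hm|]; [|reflexivity].
  destruct (Rlt_dec (INR m) (IZR M / IZR d)); [|reflexivity].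
  assert (0 < INR m) by (eapply Rlt_le_trans; [|apply Hm]; apply Rdiv_lt_0_compat; nra).
  rewrite rsum_lsum, <- lsum_scal_l. apply lsum_ext; intros k _.
  destruct (Nat.gcd k m =? 1); [|ring]. cbn [fst snd].
  rewrite csum_clsum. do 2 f_equal. apply clsum_ext; intros u _. do 2 f_equal. field. lra.
Qed.

Lemma cfun_Cnorm2_sum_le q P alpha kappa rho1 l u : (1 <= q)%nat ->
  lsum (seq 0 (q ^ rho1)) (fun h => Cnorm2 (cfun q P alpha kappa rho1 l u h)) <= 20.
Proof.
  intros Hq. apply dft_Cnorm2_sum_le; [apply Nat.neq_0_lt_0, Nat.pow_nonzero; lia|].
  intros w. rewrite Cnorm2_mul, Cnorm2_conj. unfold fPrho, fP. rewrite !Cnorm2_ee. lra.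
Qed.

Lemma Ssum_nonneg q P alpha mu nu M d kappa rho1 l theta :
  (1 <= q)%nat -> (0 < M)%Z -> (1 <= d)%Z -> 0 <= Ssum q P alpha mu nu M d kappa rho1 l theta.
Proof.
  intros Hq HM Hd. assert (1 <= INR q) by (apply (le_INR 1); auto).
  assert (Hb : 0 < IZR M / IZR d) by (apply Rdiv_lt_0_compat; apply IZR_lt; lia).
  rewrite Ssum_eq_farey_sum by auto. apply lsum_nonneg; intros h _.
  apply lsum_nonneg; intros [m k] Hp. apply Rmult_le_pos; [|apply Cnorm_nonneg].
  apply Rlt_le, Rinv_0_lt_compat, (farey_pairs_denom_pos (INR q) _ _ ltac:(lra) Hb m k Hp).
Qed.

Lemma Ssum_le q P alpha mu nu M d kappa rho1 l theta :
  (1 <= q)%nat -> (0 < M)%Z -> (1 <= d)%Z -> (IZR M / IZR d) ^ 2 <= INR q ^ kappa ->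
  Ssum q P alpha mu nu M d kappa rho1 l theta
  <= sqrt (20 * (INR q + 1)) * sqrt (20 * INR q ^ rho1) * INR q ^ kappa.
Proof.
  intros Hq HM Hd HbN. assert (1 <= INR q) by (apply (le_INR 1); auto).
  assert (Hb : 0 < IZR M / IZR d) by (apply Rdiv_lt_0_compat; apply IZR_lt; lia).
  rewrite <- !pow_INR in *. rewrite Ssum_eq_farey_sum by auto.
  apply (farey_large_sieve_sum_le (INR q) _ _ (q ^ kappa) (Z.to_nat M) ltac:(lra) Hb HbN).
  - apply Nat.neq_0_lt_0, Nat.pow_nonzero; lia.
  - lra.
  - intros u. now apply cfun_Cnorm2_sum_le.
Qed.

Theorem mainTheorem2 :
  forall q : nat, (2 <= q)%nat ->
  exists C : R,
  forall (P : nat -> nat), (forall a b : nat, (a <= b)%nat -> (P a <= P b)%nat) ->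
  forall (alpha : R) (mu nu d M : Z) (kappa rho1 l : nat) (theta : R),
    (1 <= d)%Z ->
    powerRZ (INR q) (mu - 1) <= IZR M < powerRZ (INR q) mu ->
    (1 <= kappa)%nat -> INR kappa <= 2 / 3 * IZR (mu + nu) ->
    powerRZ (INR q) (Z.of_nat kappa - 1) < (IZR M) ^ 2 / (IZR d) ^ 2
      <= powerRZ (INR q) (Z.of_nat kappa) ->
    (Z.of_nat rho1 <= mu + nu - Z.of_nat kappa)%Z ->
    Rabs (Ssum q P alpha mu nu M d kappa rho1 l theta)
      <= C * ln (INR q) * Rpower (INR q) (INR rho1 / 2 + INR kappa).
Proof.
  intros q Hq. assert (Hq2 : 2 <= INR q) by (apply (le_INR 2); auto).
  assert (Hln : 0 < ln (INR q)) by (rewrite <- ln_1; apply ln_increasing; lra).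
  exists (sqrt (20 * (INR q + 1)) * sqrt 20 / ln (INR q)).
  intros P _ alpha mu nu d M kappa rho1 l theta Hd HM _ _ [_ HMd] _.
  assert (HM0 : (0 < M)%Z) by (apply lt_0_IZR; pose proof (powerRZ_lt (INR q) (mu - 1)); lra).
  assert (HbN : (IZR M / IZR d) ^ 2 <= INR q ^ kappa).
  { rewrite (pow_powerRZ (INR q)). replace ((IZR M / IZR d) ^ 2) with (IZR M ^ 2 / IZR d ^ 2); auto.
    field. apply not_0_IZR. lia. }
  rewrite Rabs_right by (apply Rle_ge, Ssum_nonneg; auto; lia).
  eapply Rle_trans; [apply Ssum_le; auto; lia|]. right.
  replace (INR rho1 / 2) with (INR rho1 * / 2) by (unfold Rdiv; ring).
  rewrite Rpower_plus, <- Rpower_mult, Rpower_sqrt, !Rpower_pow by (try apply exp_pos; lra).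
  rewrite (sqrt_mult 20 (INR q ^ rho1)) by (try apply pow_le; lra).
  generalize (INR q ^ rho1) (INR q ^ kappa); intros. field. lra.
Qed.
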